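(* Let $C=(C_{i,j})$ be an $m\times n$ evolutionary stable (ES) configuration and let $k\ge 0$ be an integer. Then there are no indices $i,j$ (with all positions below lying in the grid) such that either (Type I) $C_{i-1,j-1}=0$, $C_{i,j}=0$, $C_{i+1,j+1}=0$, $C_{i+1,j+2}=1$, for every $t=0,1,\dots,k$: $C_{i+1,j+3+3t}=1$, $C_{i+1,j+4+3t}=0$, $C_{i+1,j+5+3t}=1$, and $C_{i,j+3k+3}=C_{i,j+3k+4}=C_{i,j+3k+5}=1$; or (Type II) $C_{i,j}=0$, $C_{i+1,j-1}=0$, $C_{i+1,j+1}=0$, $C_{i+1,j+2}=1$, for every $t=0,1,\dots,k$: $C_{i+1,j+3+3t}=1$, $C_{i+1,j+4+3t}=0$, $C_{i+1,j+5+3t}=1$, and $C_{i,j+3k+3}=C_{i,j+3k+4}=C_{i,j+3k+5}=1$. The same holds for the mirror images of these two constellations under the reflection $j\mapsto n+1-j$ of columns.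
   Context: An $m\times n$ configuration is a $0$-$1$ matrix $C=(C_{i,j})$, $1\le i\le m$, $1\le j\le n$; $C_{i,j}=1$ means lot $(i,j)$ is occupied by a house. Row $1$ is the northernmost, row $m$ the southernmost; column $1$ westernmost, column $n$ easternmost. A house at $(i,j)$ is blocked from sunlight if the three lots $(i,j-1)$, $(i,j+1)$, $(i+1,j)$ all lie inside the grid and are all occupied (lots outside the grid never obstruct sunlight). $C$ is permissible if no house is blocked, and maximal if it is permissible and setting any single empty lot to $1$ yields a non-permissible configuration. A maximal configuration is resistant to predators if, for every empty lot, putting a house on it results in that new house being blocked; it is resistant to altruists if, for every empty lot, putting a house on it results in some other (already existing) house being blocked. An ES configuration is a maximal configuration resistant to both predators and altruists. *)

(* Configurations are functions nat -> nat -> bool,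
   rows/columns indexed 1-based; only positions inside the m x n grid are ever
   consulted. C i j = true means lot (i,j) is occupied. *)
From mathcomp Require Import all_boot.
Set Implicit Arguments. Unset Strict Implicit. Unset Printing Implicit Defensive.

Definition config := nat -> nat -> bool.

Definition inGrid (m n i j : nat) : Prop := 1 <= i <= m /\ 1 <= j <= n.

Definition blocked (m n : nat) (C : config) (i j : nat) : Prop :=
  [/\ C i j, 2 <= j, j + 1 <= n, i + 1 <= m &
      [/\ C i j.-1, C i j.+1 & C i.+1 j]].

Definition permissible (m n : nat) (C : config) : Prop :=
  forall i j, inGrid m n i j -> C i j = true -> ~ blocked m n C i j.

Definition addHouse (C : config) (a b : nat) : config :=
  fun i j => if (i == a) && (j == b) then true else C i j.

Definition maximal (m n : nat) (C : config) : Prop :=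
  permissible m n C /\
  forall a b, inGrid m n a b -> C a b = false -> ~ permissible m n (addHouse C a b).

Definition resistant_predators (m n : nat) (C : config) : Prop :=
  forall a b, inGrid m n a b -> C a b = false -> blocked m n (addHouse C a b) a b.

Definition resistant_altruists (m n : nat) (C : config) : Prop :=
  forall a b, inGrid m n a b -> C a b = false ->
    exists i j, [/\ inGrid m n i j, (i, j) <> (a, b), C i j = true &
                    blocked m n (addHouse C a b) i j].

Definition ES (m n : nat) (C : config) : Prop :=
  [/\ maximal m n C, resistant_predators m n C & resistant_altruists m n C].

Definition mirror (n : nat) (C : config) : config := fun i j => C i (n.+1 - j).

Definition tail_pattern (C : config) (k i j : nat) : Prop :=
  C i.+1 (j + 2) = true /\
  (forall t, t <= k ->
     [/\ C i.+1 (j + 3 + 3 * t) = true, C i.+1 (j + 4 + 3 * t) = false &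
         C i.+1 (j + 5 + 3 * t) = true]) /\
  [/\ C i (j + 3 * k + 3) = true, C i (j + 3 * k + 4) = true &
      C i (j + 3 * k + 5) = true].

Definition typeI (m n : nat) (C : config) (k i j : nat) : Prop :=
  [/\ 2 <= i, i + 1 <= m, 2 <= j, j + 3 * k + 5 <= n &
  [/\ C i.-1 j.-1 = false, C i j = false, C i.+1 j.+1 = false &
      tail_pattern C k i j]].

Definition typeII (m n : nat) (C : config) (k i j : nat) : Prop :=
  [/\ 1 <= i, i + 1 <= m, 2 <= j, j + 3 * k + 5 <= n &
  [/\ C i j = false, C i.+1 j.-1 = false, C i.+1 j.+1 = false &
      tail_pattern C k i j]].

From mathcomp Require Import all_boot zify.
Set Implicit Arguments. Unset Strict Implicit. Unset Printing Implicit Defensive.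

(* In an ES configuration no house is blocked and every empty lot has occupied
   left, right and lower neighbours.  In a constellation on rows i, i+1 the lot
   (i, j) is empty and (i, j+3k+3) is not, so there is a first u with
   (i, j+3u) empty and (i, j+3u+3) occupied; then (i, j+3u+2) is empty too,
   as it would otherwise be blocked.  Above two empty lots at distance two,
   row i-1 has two houses with an empty lot between them, and resistance to
   altruists for that lot forces three houses at (i-2, j+3u .. j+3u+2); for
   u = 0 this already contradicts the defining conditions of Types I and II.
   Row i-1 is occupied above the empty lots (i, j+3v), and going left from
   column j+3u it reads 1 0 1 on the columns j+3w .. j+3w+2 until it starts
   exactly like a Type II constellation.  So every constellation yields a
   Type II constellation two rows higher, which is absurd by induction on the
   row; mirroring preserves ES. *)

(* [lia] is exponential in the number of boolean hypotheses, so the facts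
   about the configuration are cleared first. *)
Ltac grid_lia :=
  repeat match goal with
  | H : is_true (?c _ _) |- _ => is_var c; clear H
  | H : ?c _ _ = false |- _ => is_var c; clear H
  end; lia.

Lemma addHouse_neq (C : config) a b x y : (x, y) <> (a, b) -> addHouse C a b x y = C x y.
Proof. by rewrite /addHouse; case: eqP => [-> | //]; case: eqP => [-> | //]. Qed.

Lemma ex_prefix_crossing (P : pred nat) k : P 0 -> ~~ P k.+1 ->
  exists u, [/\ u <= k, forall v, v <= u -> P v & ~~ P u.+1].
Proof.
move=> h0 hk; have hex : exists w, ~~ P w by exists k.+1.
case: (ex_minnP hex) => [[|u] hu hmin]; first by rewrite h0 in hu.
exists u; split => // [|v hv]; first by have := hmin _ hk.
by apply/negPn/negP => /hmin; grid_lia.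
Qed.

Lemma ex_run_start (P : pred nat) u : P u ->
  exists s, [/\ s <= u, forall w, s <= w <= u -> P w & 0 < s -> ~~ P s.-1].
Proof.
elim: u => [|u IH] hu.
  by exists 0; split => // w; rewrite leqn0 => /eqP ->.
case: (boolP (P u)) => [/IH [s [hsu hrun hs]] | hnu].
  exists s; split => // [|w /andP [hsw]]; first grid_lia.
  by rewrite leq_eqVlt => /orP [/eqP -> // | hwu]; apply: hrun; rewrite hsw.
by exists u.+1; split => // w; rewrite -eqn_leq => /eqP <-.
Qed.

(* The part of a Type I or II constellation that the argument uses. *)
Definition ladder (C : config) (k i j : nat) : Prop :=
  [/\ C i j = false, C i (j + 3 * k.+1) = true &
      forall v, v <= k -> C i.+1 (j + 3 * v).+1 = false /\ C i.+1 (j + 3 * v).+2 = true].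

Lemma tail_ladder (C : config) k i j :
  C i j = false -> C i.+1 j.+1 = false -> tail_pattern C k i j -> ladder C k i j.
Proof.
move=> hc hd1 [hd2 [hper [hk _ _]]]; split => //.
  by have -> : j + 3 * k.+1 = j + 3 * k + 3 by grid_lia.
case=> [|v] hv; first by rewrite muln0 addn0 -addn2.
have [_ h4 h5] := hper v (ltnW hv).
have -> : (j + 3 * v.+1).+2 = j + 5 + 3 * v by grid_lia.
by have -> : (j + 3 * v.+1).+1 = j + 4 + 3 * v by grid_lia.
Qed.

Lemma typeII_of_run m n (C : config) r j s u :
  1 <= r < m -> 2 <= j -> s < u -> (j + 3 * u).+2 <= n ->
  C r (j + 3 * s) = false -> C r.+1 (j + 3 * s).-1 = false ->
  (forall w, s <= w <= u -> C r.+1 (j + 3 * w).+1 = false /\ C r.+1 (j + 3 * w).+2) ->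
  (forall w, s < w <= u -> C r.+1 (j + 3 * w)) ->
  [/\ C r (j + 3 * u), C r (j + 3 * u).+1 & C r (j + 3 * u).+2] ->
  typeII m n C (u - s).-1 r (j + 3 * s).
Proof.
move=> hr hj hsu hun ha hbl hrun hb [hc0 hc1 hc2].
have [hb1 hb2] : C r.+1 (j + 3 * s).+1 = false /\ C r.+1 (j + 3 * s).+2.
  by apply: hrun; rewrite leqnn ltnW.
split; try grid_lia; split => //; split; first by rewrite addn2.
split=> [t ht | ].
  have hw : s < s + t.+1 <= u by grid_lia.
  have [h4 h5] : C r.+1 (j + 3 * (s + t.+1)).+1 = false /\ C r.+1 (j + 3 * (s + t.+1)).+2.
    by apply: hrun; grid_lia.
  have -> : j + 3 * s + 3 + 3 * t = j + 3 * (s + t.+1) by grid_lia.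
  have -> : j + 3 * s + 5 + 3 * t = (j + 3 * (s + t.+1)).+2 by grid_lia.
  have -> : j + 3 * s + 4 + 3 * t = (j + 3 * (s + t.+1)).+1 by grid_lia.
  by split => //; apply: hb.
have -> : j + 3 * s + 3 * (u - s).-1 + 3 = j + 3 * u by grid_lia.
have -> : j + 3 * s + 3 * (u - s).-1 + 5 = (j + 3 * u).+2 by grid_lia.
by have -> : j + 3 * s + 3 * (u - s).-1 + 4 = (j + 3 * u).+1 by grid_lia.
Qed.

Section ESFacts.

Variables (m n : nat) (C : config).
Hypothesis hES : ES m n C.

Lemma ES_unblocked a b :
  1 <= a < m -> 2 <= b < n -> C a b -> C a b.-1 -> C a b.+1 -> C a.+1 b -> False.
Proof.
case: hES => [[hperm _] _ _] ha hb hc hl hr hd.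
apply: (hperm a b) => //; first by rewrite /inGrid; grid_lia.
by split => //; grid_lia.
Qed.

Lemma ES_empty a b : inGrid m n a b -> C a b = false ->
  [/\ 2 <= b < n, a < m & [/\ C a b.-1, C a b.+1 & C a.+1 b]].
Proof.
case: hES => _ hpred _ hg hc.
have [_ hb2 hbn ham [hl hr hd]] := hpred a b hg hc.
rewrite !addHouse_neq in hl hr hd; try by case; grid_lia.
by split; [grid_lia | grid_lia | split].
Qed.

Lemma ES_occupied_above a b : 1 <= a <= m -> 1 <= b <= n -> C a.+1 b = false -> C a b.
Proof.
move=> ha hb hd; case hc: (C a b) => //.
have hg : inGrid m n a b by rewrite /inGrid; grid_lia.
by have [_ _ [_ _]] := ES_empty hg hc; rewrite hd.
Qed.

(* A house added at (a,b) can only block a row neighbour whose lower lot is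
   occupied; otherwise the house it blocks is the one just above. *)
Lemma ES_altruist_above a b : inGrid m n a b -> C a b = false ->
  C a.+1 b.-1 = false -> C a.+1 b.+1 = false ->
  [/\ 2 <= a, C a.-1 b.-1, C a.-1 b & C a.-1 b.+1].
Proof.
case: hES => _ _ halt hg hc hdl hdr.
have [i [j [hgij _ hcij [_ hj2 hjn him [hl hr hd]]]]] := halt a b hg hc.
case: (eqVneq (i, j.-1) (a, b)) => [[ei ej] | /eqP nl].
  rewrite addHouse_neq in hd; last by case; grid_lia.
  have ej' : j = b.+1 by grid_lia.
  by rewrite ei ej' hdr in hd.
case: (eqVneq (i, j.+1) (a, b)) => [[ei ej] | /eqP nr].
  rewrite addHouse_neq in hd; last by case; grid_lia.
  have ej' : j = b.-1 by grid_lia.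
  by rewrite ei ej' hdl in hd.
move: hgij; rewrite /inGrid => hgij.
rewrite !addHouse_neq // in hl hr.
case: (eqVneq (i.+1, j) (a, b)) => [[ei ej] | /eqP nd].
  have -> : a.-1 = i by grid_lia.
  by rewrite -ej; split => //; grid_lia.
rewrite addHouse_neq // in hd.
by case: (ES_unblocked (a := i) (b := j)) => //; grid_lia.
Qed.

Lemma ES_gap r x : r.+2 <= m -> 1 <= x -> x.+2 <= n ->
  C r.+2 x = false -> C r.+2 x.+2 = false ->
  [/\ 1 <= r, C r.+1 x.-1, C r.+1 x.+1 = false & [/\ C r x, C r x.+1 & C r x.+2]].
Proof.
move=> hm hx hxn hc0 hc2.
have hg0 : inGrid m n r.+2 x by rewrite /inGrid; grid_lia.
have [hx2 _ [_ hc1 _]] := ES_empty hg0 hc0.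
have hb0 : C r.+1 x by apply: ES_occupied_above => //; grid_lia.
have hb2 : C r.+1 x.+2 by apply: ES_occupied_above => //; grid_lia.
have hb1 : C r.+1 x.+1 = false.
  by apply/negbTE/negP => hb1; apply: (ES_unblocked (a := r.+1) (b := x.+1)) => //; grid_lia.
have hg1 : inGrid m n r.+1 x.+1 by rewrite /inGrid; grid_lia.
have [hr ha0 ha1 ha2] := ES_altruist_above hg1 hb1 hc0 hc2.
have ha : C r x.-1 = false.
  by apply/negbTE/negP => ha; apply: (ES_unblocked (a := r) (b := x)) => //; grid_lia.
have hga : inGrid m n r x.-1 by rewrite /inGrid; grid_lia.
have [_ _ [_ _ hbl]] := ES_empty hga ha.
by split.
Qed.

Lemma ladder_gap k i j : 1 <= i < m -> 2 <= j -> j + 3 * k.+1 <= n -> ladder C k i j ->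
  exists u, [/\ u <= k, forall v, v <= u -> C i (j + 3 * v) = false & C i (j + 3 * u).+2 = false].
Proof.
move=> hi hj hjn [hc0 hck hd].
have h0 : ~~ C i (j + 3 * 0) by rewrite muln0 addn0 hc0.
have hk1 : ~~ ~~ C i (j + 3 * k.+1) by rewrite hck.
have [u [huk hpre hu1]] := ex_prefix_crossing (P := fun v => ~~ C i (j + 3 * v)) h0 hk1.
exists u; split => // [v hv|]; first exact/negbTE/hpre.
have [hd1 hd2] := hd u huk.
apply/negbTE/negP => hc2.
have hl : C i (j + 3 * u).+1 by apply: ES_occupied_above => //; grid_lia.
have hr : C i (j + 3 * u).+3.
  by move: hu1; rewrite negbK; have -> : j + 3 * u.+1 = (j + 3 * u).+3 by grid_lia.
by apply: (ES_unblocked (a := i) (b := (j + 3 * u).+2)) => //; grid_lia.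
Qed.

Lemma ES_above_empty_run r j u : r.+2 <= m -> 1 <= j -> (j + 3 * u).+2 <= n ->
  (forall v, v <= u -> C r.+2 (j + 3 * v) = false) ->
  [/\ forall w, w <= u -> C r.+1 (j + 3 * w),
      forall w, w <= u -> C r.+1 (j + 3 * w).+1 = false -> C r.+1 (j + 3 * w).+2 &
      forall w, w < u -> C r.+1 (j + 3 * w).+1 -> C r.+1 (j + 3 * w).+2 = false].
Proof.
move=> hm hj hn hempty.
have hb w : w <= u -> C r.+1 (j + 3 * w) by move=> hw; apply: ES_occupied_above (hempty w hw); grid_lia.
split=> // w hw h1.
  have hg : inGrid m n r.+1 (j + 3 * w).+1 by rewrite /inGrid; grid_lia.
  by have [_ _ [_ ->]] := ES_empty hg h1.
have e : (j + 3 * w).+3 = j + 3 * w.+1 by grid_lia.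
have hg : inGrid m n r.+2 (j + 3 * w.+1) by rewrite /inGrid; grid_lia.
have [_ _ [hc _ _]] := ES_empty hg (hempty _ hw).
rewrite -e /= in hc.
apply/negbTE/negP => h2; apply: (ES_unblocked (a := r.+1) (b := (j + 3 * w).+2)) => //; try grid_lia.
by rewrite e; apply: hb.
Qed.

Lemma ladder_block_above r k j : r.+3 <= m -> 2 <= j -> j + 3 * k.+1 <= n ->
  ladder C k r.+2 j -> C r.+1 j.-1 = false \/ C r.+1 j.+1 ->
  exists2 u, 0 < u <= k &
    [/\ 1 <= r, forall v, v <= u -> C r.+2 (j + 3 * v) = false,
        C r.+1 (j + 3 * u.-1).+1 = false, C r.+1 (j + 3 * u).+1 = false &
        [/\ C r (j + 3 * u), C r (j + 3 * u).+1 & C r (j + 3 * u).+2]].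
Proof.
move=> hm hj hjn hlad hstart.
have hi : 1 <= r.+2 < m by grid_lia.
have [u [huk hempty hgap]] := ladder_gap hi hj hjn hlad.
have hun : (j + 3 * u).+2 <= n by grid_lia.
have hx : 1 <= j + 3 * u by grid_lia.
have [hr hbl hbr hblock] := ES_gap (ltnW hm) hx hun (hempty u (leqnn u)) hgap.
have hu0 : 0 < u.
  move: hbl hbr; case: (posnP u) => [-> | //]; rewrite muln0 addn0.
  by case: hstart => ->.
exists u; first by rewrite hu0.
split => //.
have [_ _ hRprev] := ES_above_empty_run (ltnW hm) (ltnW hj) hun hempty.
have hu1 : u.-1 < u by grid_lia.
apply/negbTE/negP => /(hRprev _ hu1) /negP; apply.
by have -> : (j + 3 * u.-1).+2 = (j + 3 * u).-1 by grid_lia.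
Qed.

Lemma ladder_typeII_above r k j : r.+3 <= m -> 2 <= j -> j + 3 * k.+1 <= n ->
  ladder C k r.+2 j -> C r.+1 j.-1 = false \/ C r.+1 j.+1 ->
  exists k' j', typeII m n C k' r j'.
Proof.
move=> hm hj hjn hlad hstart.
have [u /andP [hu0 huk] [hr hempty hLu1 hLu hblock]] :=
  ladder_block_above hm hj hjn hlad hstart.
have hun : (j + 3 * u).+2 <= n by grid_lia.
have [hb hLnext hRprev] := ES_above_empty_run (ltnW hm) (ltnW hj) hun hempty.
pose L w := ~~ C r.+1 (j + 3 * w).+1.
have [s [hsu hrun hs0]] := ex_run_start (P := L) (negbT hLu).
have hsu' : s < u.
  rewrite ltn_neqAle hsu andbT; apply/eqP => es; subst s.
  by move: (hs0 hu0); rewrite /L hLu1.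
have hbs : C r.+1 (j + 3 * s).-1 = false.
  case: (posnP s) => [s0 | spos].
    rewrite s0 muln0 addn0; case: hstart => // h.
    by have := hrun 0; rewrite s0 /L muln0 addn0 h leq0n => /(_ isT).
  have hs1 : s.-1 < u by grid_lia.
  have := hs0 spos; rewrite /L negbK => /(hRprev _ hs1).
  by have -> : (j + 3 * s.-1).+2 = (j + 3 * s).-1 by grid_lia.
have has : C r (j + 3 * s) = false.
  apply/negbTE/negP => h.
  have hl : C r (j + 3 * s).-1 by apply: ES_occupied_above hbs; grid_lia.
  have hrr : C r (j + 3 * s).+1.
    by apply: ES_occupied_above; [grid_lia | grid_lia | apply/negbTE/hrun; grid_lia].
  by apply: (ES_unblocked _ _ h hl hrr (hb s hsu)); grid_lia.
exists (u - s).-1, (j + 3 * s); apply: typeII_of_run => //; try grid_lia.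
  move=> w hw; have hLw := negbTE (hrun w hw).
  by split => //; apply: hLnext => //; grid_lia.
by move=> w hw; apply: hb; grid_lia.
Qed.

Lemma typeI_climb k i j :
  typeI m n C k i j -> exists r, i = r.+2 /\ exists k' j', typeII m n C k' r j'.
Proof.
move=> [hi him hj hjn [h1 h2 h3 ht]].
have [r ei] : exists r, i = r.+2 by exists i.-2; grid_lia.
subst i; exists r; split => //.
by apply: (ladder_typeII_above _ _ _ (tail_ladder h2 h3 ht)); [grid_lia | grid_lia | grid_lia | left].
Qed.

Lemma typeII_climb k i j :
  typeII m n C k i j -> exists r, i = r.+2 /\ exists k' j', typeII m n C k' r j'.
Proof.
move=> [hi him hj hjn [h1 h2 h3 ht]].
have hg : inGrid m n i j by rewrite /inGrid; grid_lia.
have [hi2 _ _ hb] := ES_altruist_above hg h1 h2 h3.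
have [r ei] : exists r, i = r.+2 by exists i.-2; grid_lia.
subst i; exists r; split => //.
by apply: (ladder_typeII_above _ _ _ (tail_ladder h1 h3 ht)); [grid_lia | grid_lia | grid_lia | right].
Qed.

Lemma ES_no_typeII k i j : ~ typeII m n C k i j.
Proof.
elim/ltn_ind: i k j => i IH k j /typeII_climb [r [ei [k' [j' h]]]].
by apply: (IH r _ k' j' h); rewrite ei.
Qed.

Lemma ES_no_typeI k i j : ~ typeI m n C k i j.
Proof. by move=> /typeI_climb [r [_ [k' [j' /ES_no_typeII]]]]. Qed.

End ESFacts.

Lemma blocked_eq m n (D D' : config) a b :
  (forall x y, D x y = D' x y) -> blocked m n D a b <-> blocked m n D' a b.
Proof. by move=> E; rewrite /blocked !E. Qed.

Lemma mirror_blocked m n (D : config) a b : 1 <= b <= n ->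
  blocked m n (mirror n D) a b <-> blocked m n D a (n.+1 - b).
Proof.
move=> hb; rewrite /blocked /mirror.
have -> : n.+1 - b.-1 = (n.+1 - b).+1 by grid_lia.
have -> : n.+1 - b.+1 = (n.+1 - b).-1 by grid_lia.
by split=> -[? ? ? ? [? ? ?]]; split => //; try split => //; grid_lia.
Qed.

Lemma mirror_addHouse n (C : config) a b x y : b <= n ->
  addHouse (mirror n C) a b x y = mirror n (addHouse C a (n.+1 - b)) x y.
Proof.
move=> hb; rewrite /addHouse /mirror.
by have -> : (n.+1 - y == n.+1 - b) = (y == b) by apply/eqP/eqP; grid_lia.
Qed.

Lemma blocked_addHouse_mirror m n (C : config) a b x y : b <= n -> 1 <= y <= n ->
  blocked m n (addHouse (mirror n C) a b) x y <->
  blocked m n (addHouse C a (n.+1 - b)) x (n.+1 - y).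
Proof.
move=> hb hy; rewrite -mirror_blocked //.
by apply: blocked_eq => u v; apply: mirror_addHouse.
Qed.

Lemma ES_mirror m n (C : config) : ES m n C -> ES m n (mirror n C).
Proof.
move=> [[hperm _] hpred halt].
have grid_mirror a b : inGrid m n a b -> inGrid m n a (n.+1 - b) by rewrite /inGrid; grid_lia.
have hpred' : resistant_predators m n (mirror n C).
  move=> a b hg hc; have hbn : b <= n by case: hg => _ /andP [].
  apply/(blocked_addHouse_mirror m C a a hbn (proj2 hg)).
  exact: hpred (grid_mirror _ _ hg) hc.
split => //.
  split=> [a b hg hc /(mirror_blocked _ _ _ (proj2 hg)) | a b hg hc hp].
    exact: hperm (grid_mirror _ _ hg) hc.
  by apply: (hp a b hg); [rewrite /addHouse !eqxx | apply: hpred'].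
move=> a b hg hc.
have [i [j [hgij hne hcij hbl]]] := halt a _ (grid_mirror _ _ hg) hc.
move: hg hgij; rewrite /inGrid => hg hgij.
have ej : n.+1 - (n.+1 - j) = j by grid_lia.
exists i, (n.+1 - j); split.
- by rewrite /inGrid; grid_lia.
- by case=> ei ejb; apply: hne; congr pair; grid_lia.
- by rewrite /mirror ej.
- by apply/blocked_addHouse_mirror; rewrite ?ej //; grid_lia.
Qed.

Unset Implicit Arguments.

Theorem mainTheorem9 (m n : nat) (C : config) :
  ES m n C ->
  forall k i j : nat,
    [/\ ~ typeI m n C k i j, ~ typeII m n C k i j,
        ~ typeI m n (mirror n C) k i j & ~ typeII m n (mirror n C) k i j].
Proof.
move=> hES k i j; have hESm := ES_mirror hES.
by split; [exact: ES_no_typeI hES k i j | exact: ES_no_typeII hES k i j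
          | exact: ES_no_typeI hESm k i j | exact: ES_no_typeII hESm k i j].
Qed.
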